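(* Consider three agents $a,b,c$, each starting with an input value in $\{0,1\}$ (all $8$ input assignments are possible), communicating for exactly one round in the full-information test-and-set model described in the context. There is no decision protocol solving the (0-)majority consensus task in one round: there is no family of functions $\delta_i$ ($i\in\{a,b,c\}$), mapping the possible local states of agent $i$ after one round to $\{0,1\}$, such that for every input assignment and every communication graph of the test-and-set model, the output triple $(\delta_a(\ell_a),\delta_b(\ell_b),\delta_c(\ell_c))$ satisfies both majority agreement and validity.
   Context: Agents: $\mathrm{Ag}=\{a,b,c\}$. A communication graph is a reflexive relation $G \subseteq \mathrm{Ag}\times\mathrm{Ag}$; write $j \to i$ for $(j,i)\in G$. Full-information round: initially the local state of agent $i$ is its input value $x_i$; after a round with graph $G$, the local state of agent $i$ is the tuple $(m_a,m_b,m_c)$ where $m_j=x_j$ if $j\to i$ in $G$ and $m_j=\bot$ otherwise. The graph is chosen arbitrarily from the model's set of graphs. The test-and-set model consists of $9$ graphs: choose a winner $w\in\mathrm{Ag}$, and let $u,v$ be the two other agents (losers); besides reflexive loops, the graph contains $w\to u$ and $w\to v$ (the winner receives from no one), and among the losers either only $u\to v$, or only $v\to u$, or both $u\to v$ and $v\to u$. Majority consensus task: each agent outputs a value in $\{0,1\}$ computed only from its local state; (majority agreement) either all three outputs are equal, or at least two of the outputs are $0$; (validity) every output value is one of the input values of the execution (in particular, if all inputs equal $v$ then all outputs equal $v$). *)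

From Stdlib Require Import Bool.

Inductive Ag := a | b | c.

Definition Ag_eqb (x y : Ag) : bool :=
  match x, y with a, a | b, b | c, c => true | _, _ => false end.

(* A communication graph: [G j i = true] means j -> i (i receives from j). *)
Definition graph := Ag -> Ag -> bool.

Definition reflexive_graph (G : graph) : Prop := forall i, G i i = true.

Inductive loser_conf := UtoV | VtoU | Both.

Definition tas_graph (w u v : Ag) (k : loser_conf) : graph :=
  fun j i =>
    Ag_eqb j i
    || (Ag_eqb j w && (Ag_eqb i u || Ag_eqb i v))
    || match k with
       | UtoV => Ag_eqb j u && Ag_eqb i v
       | VtoU => Ag_eqb j v && Ag_eqb i u
       | Both => (Ag_eqb j u && Ag_eqb i v) || (Ag_eqb j v && Ag_eqb i u)
       end.

Definition tas_model (G : graph) : Prop :=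
  exists (w u v : Ag) (k : loser_conf),
    w <> u /\ w <> v /\ u <> v /\ G = tas_graph w u v k.

(* Input assignment x : Ag -> {0,1} (booleans: false = 0, true = 1). *)
Definition input := Ag -> bool.

Definition local_state := (option bool * option bool * option bool)%type.

Definition view (G : graph) (x : input) (i : Ag) : local_state :=
  let m j := if G j i then Some (x j) else None in
  (m a, m b, m c).

Definition majority_agreement (oa ob oc : bool) : Prop :=
  (oa = ob /\ ob = oc) \/
  (oa = false /\ ob = false) \/ (oa = false /\ oc = false) \/
  (ob = false /\ oc = false).

Definition valid_out (x : input) (o : bool) : Prop :=
  exists j, x j = o.

Definition solves_majority (delta : Ag -> local_state -> bool) : Prop :=
  forall (x : input) (G : graph), tas_model G ->
    let oa := delta a (view G x a) in
    let ob := delta b (view G x b) in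
    let oc := delta c (view G x c) in
    majority_agreement oa ob oc /\
    valid_out x oa /\ valid_out x ob /\ valid_out x oc.

(** A winner hears from nobody, and a loser that hears from everyone cannot
    tell who won, so the same local state occurs in several executions.
    Validity on unanimous inputs makes a and b decide 1 on their solo views
    with input 1, a decide 1 on the view (1,1,⊥), and c decide 0 on its solo
    view with input 0.  On input (1,1,0), majority agreement forbids exactly
    two decisions 1, so whenever two agents decide 1 the third does too; this
    propagates 1 to the full view (1,1,0) of every agent.  In the execution
    where c wins, a and b then decide 1 while c, seeing only its own 0,
    decides 0. *)


Lemma majority_agreement_true_l {p q r : bool} :
  majority_agreement p q r -> q = true -> r = true -> p = true.
Proof.
  unfold majority_agreement; intros M -> ->; destruct p; intuition discriminate.
Qed.

Lemma majority_agreement_true_m {p q r : bool} :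
  majority_agreement p q r -> p = true -> r = true -> q = true.
Proof.
  unfold majority_agreement; intros M -> ->; destruct q; intuition discriminate.
Qed.

Lemma majority_agreement_true_r {p q r : bool} :
  majority_agreement p q r -> p = true -> q = true -> r = true.
Proof.
  unfold majority_agreement; intros M -> ->; destruct r; intuition discriminate.
Qed.

Lemma valid_out_const (o y : bool) : valid_out (fun _ => o) y -> y = o.
Proof. intros [_ H]; symmetry; exact H. Qed.

Lemma tas_model_tas_graph (w u v : Ag) (k : loser_conf) :
  w <> u -> w <> v -> u <> v -> tas_model (tas_graph w u v k).
Proof. intros; exists w, u, v, k; auto. Qed.

Section OneRoundProtocol.

Variable delta : Ag -> local_state -> bool.
Hypothesis delta_solves : solves_majority delta.

Lemma run_majority (x : input) {G : graph} : tas_model G ->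
  majority_agreement (delta a (view G x a)) (delta b (view G x b))
    (delta c (view G x c)).
Proof. intros HG; apply (delta_solves x G HG). Qed.

Lemma run_valid (x : input) {G : graph} (i : Ag) : tas_model G ->
  valid_out x (delta i (view G x i)).
Proof.
  intros HG; destruct (delta_solves x G HG) as (_ & Va & Vb & Vc).
  destruct i; assumption.
Qed.

Lemma decision_unanimous (o : bool) (i : Ag) {G : graph} : tas_model G ->
  delta i (view G (fun _ => o) i) = o.
Proof. intros HG; exact (valid_out_const _ _ (run_valid _ i HG)). Qed.

Lemma full_view_decides_true :
  let full := (Some true, Some true, Some false) : local_state in
  delta a full = true /\ delta b full = true /\ delta c full = true.
Proof.
  intros full.
  (* The [exact] steps below type-check because [view] of a concrete graph
     and input reduces to the local state written in the assertion. *)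
  assert (a_wins : tas_model (tas_graph a b c Both))
    by (apply tas_model_tas_graph; discriminate).
  assert (b_wins : tas_model (tas_graph b a c Both))
    by (apply tas_model_tas_graph; discriminate).
  assert (b_wins_a_to_c : tas_model (tas_graph b a c UtoV))
    by (apply tas_model_tas_graph; discriminate).
  pose (x := (fun j => match j with c => false | _ => true end) : input).
  assert (a_solo : delta a (Some true, None, None) = true)
    by exact (decision_unanimous true a a_wins).
  assert (b_solo : delta b (None, Some true, None) = true)
    by exact (decision_unanimous true b b_wins_a_to_c).
  assert (a_sees_ab : delta a (Some true, Some true, None) = true)
    by exact (decision_unanimous true a b_wins_a_to_c).
  assert (c_full : delta c full = true) by exact
    (majority_agreement_true_r
       (run_majority x b_wins_a_to_c) a_sees_ab b_solo).
  assert (b_full : delta b full = true) by exact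
    (majority_agreement_true_m (run_majority x a_wins) a_solo c_full).
  assert (a_full : delta a full = true) by exact
    (majority_agreement_true_l (run_majority x b_wins) b_solo c_full).
  auto.
Qed.

End OneRoundProtocol.

Theorem mainTheorem2 :
  ~ exists delta : Ag -> local_state -> bool, solves_majority delta.
Proof.
  intros [delta solves].
  assert (c_wins : tas_model (tas_graph c a b Both))
    by (apply tas_model_tas_graph; discriminate).
  assert (c_solo : delta c (None, None, Some false) = false)
    by exact (decision_unanimous delta solves false c c_wins).
  destruct (full_view_decides_true delta solves) as (a_full & b_full & _).
  pose (x := (fun j => match j with c => false | _ => true end) : input).
  enough (delta c (None, None, Some false) = true) by congruence.
  exact (majority_agreement_true_r
           (run_majority delta solves x c_wins) a_full b_full).
Qed.
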